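(* Let $r\ge1$ be an integer. There is a unique real sequence $b=(b_0,b_1,\dots)$ with $b_0=1$ such that the leading diagonal of the difference table of depth $r$ of $b$ equals $(1,b_0,b_1,b_2,\dots)$. This sequence is $b_n=a_{n+1}$, where $(a_n)$ is defined by $a_0=1$, $a_{n+1}=\sum_{k=0}^n\binom nk r^{n-k}a_k$. In particular, for $r=1$, $b=(1,2,5,15,52,\dots)$ is the sequence of Bell numbers $B_1,B_2,\dots$.
   Context: The difference table of depth 1 of a sequence $c=(c_0,c_1,\dots)$ is its ordinary difference table, with top row $c$ and each subsequent row the successive differences of the row above; its leading diagonal is $(\Delta^0c_0,\Delta^1c_0,\Delta^2c_0,\dots)$ where $\Delta^mc_0=\sum_{k=0}^m(-1)^{m-k}\binom mk c_k$. The difference table of depth $r+1$ of $c$ is the difference table of depth 1 of the leading diagonal of the depth-$r$ table of $c$; its leading diagonal is the depth-$(r+1)$ leading diagonal. The Bell numbers are defined by $B_0=1$, $B_{n+1}=\sum_{k=0}^n\binom nk B_k$. *)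

From mathcomp Require Import all_boot all_order all_algebra.
From mathcomp Require Import reals.
Set Implicit Arguments. Unset Strict Implicit. Unset Printing Implicit Defensive.
Import Order.TTheory GRing.Theory Num.Theory.
Local Open Scope ring_scope.

(* Leading diagonal of the (depth-1) difference table of c:
   m |-> Delta^m c_0 = sum_{k=0}^m (-1)^(m-k) C(m,k) c_k. *)
Definition lead_diag {R : pzRingType} (c : nat -> R) : nat -> R :=
  fun m => \sum_(k < m.+1) (-1) ^+ (m - k) * ('C(m, k))%:R * c k.

Definition lead_diag_depth {R : pzRingType} (r : nat) (c : nat -> R) : nat -> R :=
  iter r lead_diag c.

Definition shift1 {R : pzRingType} (b : nat -> R) : nat -> R :=
  fun n => if n is m.+1 then b m else 1.

(* The binomial transform [T_x c m = sum_k C(m,k) x^(m-k) c_k] satisfies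
   [T_x (T_y c) = T_(x+y) c] and [T_0 c = c]. The difference operator is
   [T_(-1)], so the depth-r leading diagonal is [T_(-r)]. Hence the depth-r
   diagonal of [b] is [c = (1, b_0, b_1, ...)] iff [c_(n+1) = T_r c n], which
   is the recursion defining [a]; so [c = a]. For [r = 1] it is the Bell
   recursion. *)

From mathcomp Require Import all_boot all_order all_algebra.
From mathcomp Require Import reals ring.
From Stdlib Require Import FunctionalExtensionality.
Set Implicit Arguments. Unset Strict Implicit. Unset Printing Implicit Defensive.
Import Order.TTheory GRing.Theory Num.Theory.
Local Open Scope ring_scope.

Lemma bin_mul_bin (m k i : nat) : (i + k <= m)%N ->
  ('C(m, i + k) * 'C(i + k, k) = 'C(m, k) * 'C(m - k, i))%N.
Proof.
move=> le_ikm; have le_km : (k <= m)%N := leq_trans (leq_addl i k) le_ikm.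
have le_i_mk : (i <= m - k)%N by rewrite leq_subRL // addnC.
apply/eqP; rewrite -(eqn_pmul2r (fact_gt0 (m - (i + k)))).
rewrite -(eqn_pmul2r (fact_gt0 i)) -(eqn_pmul2r (fact_gt0 k)); apply/eqP.
have e1 := bin_fact le_ikm; have e2 := bin_fact (leq_addl i k).
have e3 := bin_fact le_km; have e4 := bin_fact le_i_mk.
rewrite addnK in e2; rewrite -subnDA addnC in e4.
transitivity m`!; first by rewrite -e1 -e2; ring.
by rewrite -e3 -e4; ring.
Qed.

Section BinomialTransform.
Variable R : comPzRingType.
Implicit Types (x y : R) (c d : nat -> R).

Definition binom_trans x c : nat -> R :=
  fun m => \sum_(k < m.+1) ('C(m, k))%:R * x ^+ (m - k) * c k.

Lemma eq_binom_trans x {c d} : c =1 d -> binom_trans x c =1 binom_trans x d.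
Proof. by move=> eq_cd n; apply: eq_bigr => k _; rewrite eq_cd. Qed.

Lemma binom_trans0 c : binom_trans 0 c =1 c.
Proof.
move=> n; rewrite /binom_trans big_ord_recr /= subnn binn mulr1 mul1r big1 ?add0r //.
by move=> [k lt_kn] _ /=; rewrite expr0n subn_eq0 leqNgt lt_kn mulr0 mul0r.
Qed.

Lemma binom_transD x y c : binom_trans x (binom_trans y c) =1 binom_trans (x + y) c.
Proof.
(* After exchanging the sums, the inner sum is the binomial expansion of
   [(x + y)^(m - k)], thanks to [bin_mul_bin]. *)
move=> m; rewrite /binom_trans.
pose F j k := ('C(m, j))%:R * x ^+ (m - j) * (('C(j, k))%:R * y ^+ (j - k) * c k).
transitivity (\sum_(j < m.+1) \sum_(k < m.+1) F j k).
  apply: eq_bigr => [[j lt_jm]] _ /=; rewrite mulr_sumr.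
  rewrite (big_ord_widen m.+1 (F j)) // big_mkcond /=.
  apply: eq_bigr => k _; case: ifP => // /negbT; rewrite -leqNgt => lt_jk.
  by rewrite /F (bin_small lt_jk) !(mul0r, mulr0).
rewrite exchange_big /=; apply: eq_bigr => [[k lt_km]] _ /=.
rewrite exprDn -(big_mkord xpredT (F^~ k)) (big_cat_nat (n := k)) //=; last exact: ltnW.
rewrite big_nat_cond big1 ?add0r; last first.
  by move=> j /andP [/andP [_ lt_jk] _]; rewrite /F (bin_small lt_jk) !(mul0r, mulr0).
rewrite -{1}(add0n k) big_addn subSn // big_mkord mulr_sumr mulr_suml.
apply: eq_bigr => [[i lt_i]] _ /=.
have le_ikm : (i + k <= m)%N by rewrite ltnS leq_subRL // addnC in lt_i.
have := congr1 (fun n => n%:R : R) (@bin_mul_bin m k i le_ikm); rewrite /= !natrM => eC.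
rewrite /F -mulr_natr addnK -subnDA [(k + i)%N]addnC.
transitivity (('C(m, i + k))%:R * ('C(i + k, k))%:R * (x ^+ (m - (i + k)) * y ^+ i * c k) : R).
  by ring.
by rewrite eC; ring.
Qed.

Lemma lead_diag_depthE r c : lead_diag_depth r c =1 binom_trans (- r%:R) c.
Proof.
elim: r => [|r IHr] n; first by rewrite oppr0 binom_trans0.
rewrite /lead_diag_depth iterS -/(lead_diag_depth r c).
transitivity (binom_trans (-1) (lead_diag_depth r c) n).
  by apply: eq_bigr => k _; ring.
by rewrite (eq_binom_trans _ IHr) binom_transD -addn1 natrD opprD addrC.
Qed.

Lemma binom_transK x c : binom_trans (- x) (binom_trans x c) =1 c.
Proof. by move=> n; rewrite binom_transD addNr binom_trans0. Qed.

Lemma binom_transNK x c : binom_trans x (binom_trans (- x) c) =1 c.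
Proof. by move=> n; rewrite binom_transD subrr binom_trans0. Qed.

Lemma binom_trans_rec_eq x c d :
  (forall n, c n.+1 = binom_trans x c n) ->
  (forall n, d n.+1 = binom_trans x d n) -> c 0%N = d 0%N -> c =1 d.
Proof.
move=> recc recd eq0; elim/ltn_ind => -[|n] IHn //.
by rewrite recc recd; apply: eq_bigr => -[k lt_kn] _; rewrite IHn.
Qed.

Lemma lead_diag_depth_eq_shift1 r (b : nat -> R) :
  (forall n, lead_diag_depth r b n = shift1 b n) <->
  (forall n, shift1 b n.+1 = binom_trans r%:R (shift1 b) n).
Proof.
split=> [fixb n | recb n].
  rewrite /= -(binom_transNK r%:R b n); apply: eq_binom_trans => m.
  by rewrite -fixb lead_diag_depthE.
by rewrite lead_diag_depthE (eq_binom_trans _ recb) binom_transK.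
Qed.
End BinomialTransform.

Theorem mainTheorem2 (R : realType) (r : nat) (hr : (1 <= r)%N)
  (a : nat -> R) (ha0 : a 0%N = 1)
  (haS : forall n : nat,
     a n.+1 = \sum_(k < n.+1) ('C(n, k))%:R * (r%:R) ^+ (n - k) * a k) :
  let P := fun b : nat -> R =>
    b 0%N = 1 /\ (forall n : nat, lead_diag_depth r b n = shift1 b n) in
  (exists! b : nat -> R, P b) /\
  (forall b : nat -> R, P b -> forall n : nat, b n = a n.+1) /\
  (r = 1%N -> forall B : nat -> R, B 0%N = 1 ->
     (forall n : nat, B n.+1 = \sum_(k < n.+1) ('C(n, k))%:R * B k) ->
     forall b : nat -> R, P b -> forall n : nat, b n = B n.+1).
Proof.
move=> P.
have a_rec n : a n.+1 = binom_trans r%:R a n := haS n.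
have P_shift1 b : P b -> shift1 b =1 a.
  (* [b 0 = 1] is implied by the instance [n = 0] of the diagonal equation. *)
  case=> _ /lead_diag_depth_eq_shift1 rec_b.
  by apply: binom_trans_rec_eq rec_b a_rec _; rewrite ha0.
have P_eq b : P b -> forall n, b n = a n.+1 by move=> /P_shift1 + n => /(_ n.+1).
have shift1_a : shift1 (fun n => a n.+1) =1 a by case.
have Pa : P (fun n => a n.+1).
  split; first by rewrite a_rec /binom_trans big_ord1 ha0 !mul1r.
  apply/lead_diag_depth_eq_shift1 => n.
  by rewrite shift1_a a_rec; apply: eq_binom_trans.
split; [|split] => //.
  exists (fun n => a n.+1); split=> // b /P_eq eq_b.
  by apply: functional_extensionality => n; rewrite eq_b.
move=> r1 B B0 BS b /P_eq eq_b n; rewrite eq_b.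
suff: a =1 B by [].
apply: binom_trans_rec_eq a_rec _ _; last by rewrite ha0 B0.
by move=> m; rewrite BS r1; apply: eq_bigr => k _; rewrite expr1n mulr1.
Qed.
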